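(* Let $G^{\boldsymbol{w}}$ be the graph defined in the context. Then $L\subseteq\mathrm{Aut}(G^{\boldsymbol{w}})$. Moreover, for $v_x\in V_i$ and $v_y\in V_j$, we have $(v_x,v_y)\notin E(G^{\boldsymbol{w}})$ if and only if there exists $\sigma\in L$ with $\sigma(v_{w_i})=v_x$ and $\sigma(v_{w_j})=v_y$.
   Context: The $E_8$ root system $\Psi_{E_8}\subset\mathbb{R}^8$ consists of the 240 vectors $\pm e_i\pm e_j$ ($1\le i<j\le 8$) and all $x\in\{\pm1\}^8$ with $\prod_i x_i=1$. $G_{E_8}$ is the graph with vertices $v_x$, $x\in\Psi_{E_8}$, where $v_x=v_{-x}$, and $v_x\sim v_y$ iff $\langle x,y\rangle=0$. Let $I=\mathrm{diag}(1,1)$, $X=\begin{pmatrix}0&1\\1&0\end{pmatrix}$, $Z=\mathrm{diag}(1,-1)$, $Y=XZ$. For $M=M_1\otimes M_2\otimes M_3$ with $M_i\in\{I,X,Y,Z\}$, $\sigma_M:v_x\mapsto v_{Mx}$ is an automorphism of $G_{E_8}$ and $L=\{\sigma_M\}\cong\mathbb{Z}_2^6$. Let $V_1,\dots,V_{15}$ be the 15 orbits of $L$ on $V(G_{E_8})$ (each of size 8). For each $i$ choose $w_i\in\Psi_{E_8}$ with $v_{w_i}\in V_i$, and let $\boldsymbol{w}=\{w_1,\dots,w_{15}\}$. The graph $G^{\boldsymbol{w}}$ has vertex set $V(G_{E_8})$; for $s\in V_i$, $t\in V_j$: if $\langle w_i,w_j\rangle\neq0$ then $s\sim t$ in $G^{\boldsymbol{w}}$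 iff $s\sim t$ in $G_{E_8}$; if $\langle w_i,w_j\rangle=0$ then $s\sim t$ in $G^{\boldsymbol{w}}$ iff $s\not\sim t$ in $G_{E_8}$. *)

From HB Require Import structures.
From mathcomp Require Import all_boot all_order all_algebra.
Set Implicit Arguments. Unset Strict Implicit. Unset Printing Implicit Defensive.
Import Order.TTheory GRing.Theory Num.Theory.
Local Open Scope ring_scope.

(* Vectors of R^8 with integer coordinates (all E8 roots here are integral),
   as column vectors; coordinate e_1..e_8 is index 0..7. *)
Definition vec := 'cV[int]_8.

Definition dot (x y : vec) : int := \sum_(i < 8) x i 0 * y i 0.

Definition is_root (x : vec) : bool :=
  [exists i : 'I_8, exists j : 'I_8,
     (i < j)%N && [forall k : 'I_8,
        if k == i then (x k 0 == 1) || (x k 0 == -1)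
        else if k == j then (x k 0 == 1) || (x k 0 == -1)
        else x k 0 == 0]]
  || ([forall k : 'I_8, (x k 0 == 1) || (x k 0 == -1)]
      && (\prod_(k < 8) x k 0 == 1)).

(* v_x = v_y  iff  y = x or y = -x *)
Definition same_vertex (x y : vec) : bool := (y == x) || (y == - x).

Definition adjE8 (x y : vec) : bool := dot x y == 0.

Definition matI : 'M[int]_2 := 1%:M.
Definition matX : 'M[int]_2 := \matrix_(i < 2, j < 2) (if i == j then 0 else 1).
Definition matZ : 'M[int]_2 := \matrix_(i < 2, j < 2)
  (if i == j then (if i == 0 :> nat then 1 else -1) else 0).
Definition matY : 'M[int]_2 := matX *m matZ.

Definition pauli (k : 'I_4) : 'M[int]_2 :=
  match val k with 0 => matI | 1 => matX | 2 => matY | _ => matZ end.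

Definition bit1 (i : 'I_8) : 'I_2 := inord (i %/ 4).
Definition bit2 (i : 'I_8) : 'I_2 := inord ((i %/ 2) %% 2).
Definition bit3 (i : 'I_8) : 'I_2 := inord (i %% 2).

Definition kron3 (A B C : 'M[int]_2) : 'M[int]_8 :=
  \matrix_(i < 8, j < 8)
    (A (bit1 i) (bit1 j) * B (bit2 i) (bit2 j) * C (bit3 i) (bit3 j)).

(* index type of the elements sigma_M of L: M = M1 (x) M2 (x) M3 *)
Definition Lidx := ('I_4 * 'I_4 * 'I_4)%type.
Definition Lmat (k : Lidx) : 'M[int]_8 :=
  kron3 (pauli k.1.1) (pauli k.1.2) (pauli k.2).

Definition Lmaps (k : Lidx) (a x : vec) : bool := same_vertex (Lmat k *m a) x.

Definition inLorbit (a x : vec) : bool := [exists k : Lidx, Lmaps k a x].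

(* V_i is the orbit of v_{w_i}. *)
Definition Ltransversal (w : 'I_15 -> vec) : Prop :=
  [/\ forall i, is_root (w i),
      forall x, is_root x -> exists i, inLorbit (w i) x
    & forall i j, inLorbit (w i) (w j) -> i = j].

Definition adjGw (w : 'I_15 -> vec) (s t : vec) : bool :=
  [exists i : 'I_15, exists j : 'I_15,
     [&& inLorbit (w i) s, inLorbit (w j) t &
         if dot (w i) (w j) != 0 then adjE8 s t else ~~ adjE8 s t]].

From HB Require Import structures.
From mathcomp Require Import all_boot all_order all_algebra.
From mathcomp Require Import zify ring.
Set Implicit Arguments. Unset Strict Implicit. Unset Printing Implicit Defensive.
Import Order.TTheory GRing.Theory Num.Theory.
Local Open Scope ring_scope.

(* Each sigma_M is a signed permutation matrix, so L acts by isometries and, up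
   to sign, as the group Z_2^6 (Pauli indices multiply by xor). Preserving inner
   products and each orbit V_i, it acts on G^w by automorphisms; that it maps
   roots to roots is checked on orbit representatives.
   For the non-edges, write the four roots as images of representatives r, r':
   w_i ~ sigma_a r, x ~ sigma_a' r, w_j ~ sigma_b r' and y ~ sigma_b' r'.
   Non-adjacency of v_x and v_y says that f(d) = [<r, sigma_d r'> = 0] takes the
   same value at a'b' as at ab, while (v_x, v_y) lies in the L-orbit of
   (v_(w_i), v_(w_j)) iff (a'b')(ab) lies in H = Stab(r) Stab(r'). A computation
   over the 15 representatives shows that f(d) = f(1) exactly when d lies in H,
   and that H has index at most 2 when r <> r'; when r = r' we have i = j and
   may take a = b. Either way, (a'b')(ab) lies in H iff a'b' and ab are both in
   H or both outside it. *)

(** * Pauli matrices as signed permutations *)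

Definition pauli_flip (p : 'I_4) (a : nat) : nat :=
  if (val p == 1%N) || (val p == 2%N) then (1 - a)%N else a.

Definition pauli_sign (p : 'I_4) (a : nat) : int :=
  match val p with
  | 2 => if a == 0%N then -1 else 1
  | 3 => if a == 0%N then 1 else -1
  | _ => 1
  end.

Lemma pauliE p (a b : 'I_2) :
  pauli p a b = if b == pauli_flip p a :> nat then pauli_sign p a else 0.
Proof.
rewrite /pauli /matY /matX /matZ /matI.
case: p => [[|[|[|[|//]]]] ?] /=; rewrite ?mxE ?big_ord_recl ?big_ord0 ?mxE;
  by case: a => [[|[|//]] ?]; case: b => [[|[|//]] ?].
Qed.

Lemma pauli_mul_subproof (p q : 'I_4) : (Nat.lxor p q < 4)%N.
Proof. by case: p => [[|[|[|[|//]]]] ?]; case: q => [[|[|[|[|//]]]] ?]. Qed.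

(* With I, X, Y, Z numbered 0, 1, 2, 3, the product of two Pauli matrices is,
   up to sign, the Pauli matrix whose index is the xor of their indices. *)
Definition pauli_mul (p q : 'I_4) : 'I_4 := Ordinal (pauli_mul_subproof p q).

Definition pauli_mul_sign (p q : 'I_4) : int :=
  pauli_sign p 0 * pauli_sign q (pauli_flip p 0) * pauli_sign (pauli_mul p q) 0.

Ltac case_pauli p := case: p => [[|[|[|[|//]]]] ?].

Lemma pauli_mulC : commutative pauli_mul.
Proof. by move=> p q; apply: val_inj; case_pauli p; case_pauli q. Qed.

Lemma pauli_mulA : associative pauli_mul.
Proof. by move=> p q s; apply: val_inj; case_pauli p; case_pauli q; case_pauli s. Qed.

Lemma pauli_mul0p p : pauli_mul ord0 p = p.
Proof. by apply: val_inj; case_pauli p. Qed.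

Lemma pauli_mulpp p : pauli_mul p p = ord0.
Proof. by apply: val_inj; case_pauli p. Qed.

Lemma pauli_flip_lt p a : (a < 2)%N -> (pauli_flip p a < 2)%N.
Proof. by rewrite /pauli_flip; case: ifP; lia. Qed.

Lemma pauli_flip_mul p q a : (a < 2)%N ->
  pauli_flip (pauli_mul p q) a = pauli_flip q (pauli_flip p a).
Proof. by case: a => [|[|//]] _; case_pauli p; case_pauli q. Qed.

Lemma pauli_sign_mul p q a : (a < 2)%N ->
  pauli_sign p a * pauli_sign q (pauli_flip p a)
  = pauli_mul_sign p q * pauli_sign (pauli_mul p q) a.
Proof. by case: a => [|[|//]] _; case_pauli p; case_pauli q. Qed.

Lemma pauli_sign_sqr p a : pauli_sign p a ^+ 2 = 1.
Proof. by rewrite expr2 /pauli_sign; case: (val p) => [|[|[|[|?]]]] //; case: eqP. Qed.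

Lemma pauli_mul_sign_sqr p q : pauli_mul_sign p q ^+ 2 = 1.
Proof. by rewrite expr2; case_pauli p; case_pauli q. Qed.

(** * The group L and its action on coordinates *)

Definition Lone : Lidx := (ord0, ord0, ord0).

Definition Lmul (k k' : Lidx) : Lidx :=
  (pauli_mul k.1.1 k'.1.1, pauli_mul k.1.2 k'.1.2, pauli_mul k.2 k'.2).

Lemma LmulC : commutative Lmul.
Proof.
by move=> k k'; rewrite /Lmul !(pauli_mulC k.1.1) (pauli_mulC k.1.2) (pauli_mulC k.2).
Qed.

Lemma LmulA : associative Lmul.
Proof. by move=> k k' k''; rewrite /Lmul /= !pauli_mulA. Qed.

Lemma LmulACA : interchange Lmul Lmul.
Proof. by move=> x y z t; rewrite -!LmulA (LmulA y) (LmulC y z) -LmulA. Qed.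

Lemma Lmul1k : left_id Lone Lmul.
Proof. by case=> [[a b] c]; rewrite /Lmul /= !pauli_mul0p. Qed.

Lemma Lmulk1 : right_id Lone Lmul.
Proof. by move=> k; rewrite LmulC Lmul1k. Qed.

Lemma Lmulkk k : Lmul k k = Lone.
Proof. by rewrite /Lmul !pauli_mulpp. Qed.

Lemma LmulKk : left_loop id Lmul.
Proof. by move=> k k'; rewrite LmulA Lmulkk Lmul1k. Qed.

Lemma card_Lidx : #|{: Lidx}| = 64%N.
Proof. by rewrite !card_prod !card_ord. Qed.

Definition Lperm (k : Lidx) (i : nat) : nat :=
  4 * pauli_flip k.1.1 (i %/ 4) + 2 * pauli_flip k.1.2 (i %/ 2 %% 2)
  + pauli_flip k.2 (i %% 2).

Definition Lsign (k : Lidx) (i : nat) : int :=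
  pauli_sign k.1.1 (i %/ 4) * pauli_sign k.1.2 (i %/ 2 %% 2) * pauli_sign k.2 (i %% 2).

Definition Lmul_sign (k k' : Lidx) : int :=
  pauli_mul_sign k.1.1 k'.1.1 * pauli_mul_sign k.1.2 k'.1.2 * pauli_mul_sign k.2 k'.2.

Lemma digits8_lt i : (i < 8)%N -> [/\ (i %/ 4 < 2)%N, (i %/ 2 %% 2 < 2)%N & (i %% 2 < 2)%N].
Proof. by move=> lti; split; lia. Qed.

Lemma eq_digits8 j a b c : (j < 8)%N -> (a < 2)%N -> (b < 2)%N -> (c < 2)%N ->
  (j == 4 * a + 2 * b + c)%N = [&& (j %/ 4 == a)%N, (j %/ 2 %% 2 == b)%N & (j %% 2 == c)%N].
Proof.
move=> *; apply/eqP/and3P => [->|[/eqP<- /eqP<- /eqP<-]]; last lia.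
by split; apply/eqP; lia.
Qed.

Lemma Lperm_lt k i : (i < 8)%N -> (Lperm k i < 8)%N.
Proof.
case/digits8_lt => /(pauli_flip_lt k.1.1) ? /(pauli_flip_lt k.1.2) ? /(pauli_flip_lt k.2) ?.
rewrite /Lperm; lia.
Qed.

Lemma Lperm_digits k i : (i < 8)%N ->
  [/\ (Lperm k i %/ 4 = pauli_flip k.1.1 (i %/ 4))%N,
      (Lperm k i %/ 2 %% 2 = pauli_flip k.1.2 (i %/ 2 %% 2))%N
    & (Lperm k i %% 2 = pauli_flip k.2 (i %% 2))%N].
Proof.
move=> lti; have [ia ib ic] := digits8_lt lti.
have := eq_digits8 (Lperm_lt k lti) (pauli_flip_lt k.1.1 ia) (pauli_flip_lt k.1.2 ib)
  (pauli_flip_lt k.2 ic).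
by rewrite eqxx => /esym/and3P[/eqP-> /eqP-> /eqP->].
Qed.

Lemma Lperm1 i : (i < 8)%N -> Lperm Lone i = i.
Proof. by rewrite /Lperm /pauli_flip /=; lia. Qed.

Lemma Lperm_mul k k' i : (i < 8)%N -> Lperm (Lmul k k') i = Lperm k' (Lperm k i).
Proof.
move=> lti; have [ia ib ic] := digits8_lt lti.
rewrite [Lperm k' _]/Lperm; have [-> -> ->] := Lperm_digits k lti.
by rewrite /Lperm !pauli_flip_mul.
Qed.

Lemma Lsign_mul k k' i : (i < 8)%N ->
  Lsign k i * Lsign k' (Lperm k i) = Lmul_sign k k' * Lsign (Lmul k k') i.
Proof.
move=> lti; have [ia ib ic] := digits8_lt lti.
rewrite [Lsign k' _]/Lsign; have [-> -> ->] := Lperm_digits k lti.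
have regroup (a b c a' b' c' : int) : a * b * c * (a' * b' * c') = a * a' * (b * b') * (c * c').
  by ring.
by rewrite /Lsign regroup !pauli_sign_mul // /Lmul_sign; ring.
Qed.

Lemma Lsign_sqr k i : Lsign k i ^+ 2 = 1.
Proof. by rewrite /Lsign !exprMn !pauli_sign_sqr !mul1r. Qed.

Lemma Lmul_sign_sqr k k' : Lmul_sign k k' ^+ 2 = 1.
Proof. by rewrite /Lmul_sign 2!exprMn !pauli_mul_sign_sqr !mul1r. Qed.

Lemma Lmat_entry k (i j : 'I_8) :
  Lmat k i j = if j == Lperm k i :> nat then Lsign k i else 0.
Proof.
have [ia ib ic] := digits8_lt (ltn_ord i); have [ja jb jc] := digits8_lt (ltn_ord j).
rewrite /Lmat /kron3 mxE /bit1 /bit2 /bit3 !pauliE !inordK //.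
rewrite /Lperm eq_digits8 ?pauli_flip_lt // /Lsign.
by do 3!case: eqP => _ /=; rewrite ?(mulr0, mul0r).
Qed.

Definition Lperm_ord (k : Lidx) (i : 'I_8) : 'I_8 := inord (Lperm k i).

Lemma Lmat_mulmxE k n (A : 'M[int]_(8, n)) i j :
  (Lmat k *m A) i j = Lsign k i * A (Lperm_ord k i) j.
Proof.
rewrite mxE (bigD1 (Lperm_ord k i)) //= big1 => [|l /negbTE nl].
  by rewrite Lmat_entry inordK ?Lperm_lt // eqxx addr0.
rewrite Lmat_entry ifF ?mul0r //; apply: contraFF nl => /eqP li.
by apply/eqP/val_inj; rewrite /= li inordK ?Lperm_lt.
Qed.

Lemma Lmat_mul k k' : Lmat k *m Lmat k' = Lmul_sign k k' *: Lmat (Lmul k k').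
Proof.
apply/matrixP => i j; rewrite Lmat_mulmxE [RHS]mxE !Lmat_entry inordK ?Lperm_lt //.
by rewrite Lperm_mul //; case: eqP => _; rewrite ?mulr0 // Lsign_mul.
Qed.

Lemma Lmat1 : Lmat Lone = 1%:M.
Proof.
apply/matrixP => i j; rewrite Lmat_entry Lperm1 // !mxE val_eqE eq_sym.
by case: eqP.
Qed.

Lemma Lperm_ordK k : involutive (Lperm_ord k).
Proof.
move=> i; apply: val_inj.
by rewrite /Lperm_ord /= !inordK ?Lperm_lt // -Lperm_mul // Lmulkk Lperm1.
Qed.

Lemma dot_Lmat k x y : dot (Lmat k *m x) (Lmat k *m y) = dot x y.
Proof.
rewrite /dot (reindex_inj (inv_inj (Lperm_ordK k))) /=; apply: eq_bigr => i _.
by rewrite !Lmat_mulmxE Lperm_ordK mulrACA -expr2 Lsign_sqr mul1r.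
Qed.

(** * Vertices, orbits and stabilizers *)

Local Notation sv := same_vertex.
Implicit Types x y : vec.

Lemma sv_refl x : sv x x.
Proof. by rewrite /sv eqxx. Qed.

Lemma sv_sym x y : sv x y = sv y x.
Proof. by rewrite /sv eq_sym; congr orb; apply/eqP/eqP => ->; rewrite opprK. Qed.

Lemma sv_trans {x y z} : sv x y -> sv y z -> sv x z.
Proof. by rewrite /sv => /orP[]/eqP-> /orP[]/eqP->; rewrite ?opprK eqxx ?orbT. Qed.

Lemma sv_cong x x' y y' : sv x x' -> sv y y' -> sv x y = sv x' y'.
Proof.
move=> xx' yy'; apply/idP/idP => h.
  by apply: (sv_trans _ yy'); apply: (sv_trans _ h); rewrite sv_sym.
by apply: (sv_trans xx'); apply: (sv_trans h); rewrite sv_sym.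
Qed.

Lemma sv_mulmx (A : 'M[int]_8) x y : sv x y -> sv (A *m x) (A *m y).
Proof. by case/orP=> /eqP->; rewrite ?mulmxN /sv eqxx ?orbT. Qed.

Lemma sv_scale (e : int) x : e ^+ 2 = 1 -> sv (e *: x) x.
Proof.
move/eqP; rewrite sqrf_eq1 => /orP[]/eqP->; first by rewrite scale1r sv_refl.
by rewrite scaleN1r /sv opprK eqxx orbT.
Qed.

Lemma dot_sv x x' y y' : sv x x' -> sv y y' -> (dot x y == 0) = (dot x' y' == 0).
Proof.
have dotNl u v : dot (- u) v = - dot u v.
  by rewrite /dot -sumrN; apply: eq_bigr => i _; rewrite mxE mulNr.
have dotNr u v : dot u (- v) = - dot u v.
  by rewrite /dot -sumrN; apply: eq_bigr => i _; rewrite mxE mulrN.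
by do 2!case/orP=> /eqP->; rewrite ?dotNl ?dotNr ?oppr_eq0.
Qed.

Lemma is_rootN x : is_root (- x) = is_root x.
Proof.
have pmN (z : int) : ((- z == 1) || (- z == -1)) = ((z == 1) || (z == -1)).
  by rewrite !eqr_oppLR opprK orbC.
rewrite /is_root; congr orb; last congr andb.
- by do 2!apply: eq_existsb => ?; congr andb; apply: eq_forallb => k; rewrite mxE pmN oppr_eq0.
- by apply: eq_forallb => k; rewrite mxE pmN.
rewrite (eq_bigr (fun k => - x k 0)) => [|k _]; last by rewrite mxE.
by rewrite prodrN card_ord -signr_odd expr0 mul1r.
Qed.

Lemma is_root_sv x y : sv x y -> is_root x = is_root y.
Proof. by case/orP=> /eqP->; rewrite ?is_rootN. Qed.

Lemma Lmat1x x : Lmat Lone *m x = x.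
Proof. by rewrite Lmat1 mul1mx. Qed.

Lemma Lmat_comp k k' x : sv (Lmat k *m (Lmat k' *m x)) (Lmat (Lmul k k') *m x).
Proof. by rewrite mulmxA Lmat_mul -scalemxAl sv_scale ?Lmul_sign_sqr. Qed.

Lemma Lmat_invol k x : sv (Lmat k *m (Lmat k *m x)) x.
Proof. by have := Lmat_comp k k x; rewrite Lmulkk Lmat1x. Qed.

Lemma sv_Lmat k x y : sv (Lmat k *m x) (Lmat k *m y) = sv x y.
Proof.
apply/idP/idP => [/(sv_mulmx (Lmat k)) xy|]; last exact: sv_mulmx.
by apply: sv_trans (sv_trans _ xy) (Lmat_invol k y); rewrite sv_sym Lmat_invol.
Qed.

Lemma dot0_Lmat r r' a b :
  (dot (Lmat a *m r) (Lmat b *m r') == 0) = (dot r (Lmat (Lmul a b) *m r') == 0).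
Proof. by rewrite -(dot_Lmat a); apply: dot_sv; [apply: Lmat_invol | apply: Lmat_comp]. Qed.

Lemma Lmaps_sv k a a' x x' : sv a a' -> sv x x' -> Lmaps k a x = Lmaps k a' x'.
Proof. by move=> aa'; apply: sv_cong; apply: sv_mulmx. Qed.

Lemma Lmaps_comp a k r u x : Lmaps a r u -> Lmaps k u x -> Lmaps (Lmul k a) r x.
Proof.
rewrite /Lmaps => ra kx; apply: (sv_trans _ kx); apply: (sv_trans _ (sv_mulmx (Lmat k) ra)).
by rewrite sv_sym Lmat_comp.
Qed.

Lemma Lmaps_Lmat k a b x :
  Lmaps k (Lmat a *m x) (Lmat b *m x) = Lmaps (Lmul k (Lmul a b)) x x.
Proof.
rewrite /Lmaps (sv_cong (Lmat_comp k a x) (sv_refl _)) -(sv_Lmat b).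
rewrite (sv_cong (Lmat_comp _ _ _) (Lmat_invol b x)).
by have -> : Lmul b (Lmul k a) = Lmul k (Lmul a b) by rewrite LmulC -LmulA.
Qed.

Lemma inLorbit_sv a a' x x' : sv a a' -> sv x x' -> inLorbit a x = inLorbit a' x'.
Proof. by move=> aa' xx'; apply: eq_existsb => k; apply: Lmaps_sv. Qed.

Lemma inLorbit_Lmat a k x : inLorbit a (Lmat k *m x) = inLorbit a x.
Proof.
have back k' : sv (Lmat (Lmul k k') *m a) (Lmat k *m (Lmat k' *m a)).
  by rewrite sv_sym Lmat_comp.
apply/existsP/existsP => [[k' h]|[k' h]]; exists (Lmul k k'); apply: (sv_trans (back k')).
  by apply: (sv_trans _ (Lmat_invol k x)); rewrite sv_Lmat.
by rewrite sv_Lmat.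
Qed.

Lemma inLorbitC a x : inLorbit a x = inLorbit x a.
Proof.
suff sym b y : inLorbit b y -> inLorbit y b by apply/idP/idP; apply: sym.
case/existsP=> k h; apply/existsP; exists k.
by apply: (sv_trans _ (Lmat_invol k b)); rewrite sv_Lmat sv_sym.
Qed.

Lemma inLorbit_trans b a x : inLorbit a b -> inLorbit b x -> inLorbit a x.
Proof.
case/existsP=> k h; rewrite /Lmaps sv_sym in h.
by rewrite (inLorbit_sv h (sv_refl x)) inLorbitC inLorbit_Lmat inLorbitC.
Qed.

Definition Lstab x : {set Lidx} := [set k | Lmaps k x x].

(* Stab(u) Stab(v): by Lstab_Lmul, d lies in it iff some element of L maps the
   pair (v_u, v_v) to (v_u, v_(sigma_d v)). *)
Definition Lpair (u v : vec) : {set Lidx} :=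
  [set d | [exists k, (k \in Lstab u) && (Lmul k d \in Lstab v)]].

Lemma Lstab1 x : Lone \in Lstab x.
Proof. by rewrite inE /Lmaps Lmat1x sv_refl. Qed.

Lemma LstabM x : {in Lstab x &, forall k k', Lmul k k' \in Lstab x}.
Proof.
move=> k k'; rewrite !inE /Lmaps => kx k'x.
apply: (sv_trans _ kx); rewrite sv_sym; apply: (sv_trans _ (Lmat_comp k k' x)).
by rewrite sv_Lmat sv_sym.
Qed.

Lemma Lstab_Lmul k d v : (Lmul k d \in Lstab v) = sv (Lmat d *m v) (Lmat k *m v).
Proof.
rewrite inE; have := Lmaps_Lmat Lone d k v.
by rewrite /Lmaps Lmat1x Lmul1k LmulC => ->.
Qed.

Lemma Lpair1 u v : Lone \in Lpair u v.
Proof. by rewrite inE; apply/existsP; exists Lone; rewrite Lmulkk !Lstab1. Qed.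

Lemma LpairM u v : {in Lpair u v &, forall d d', Lmul d d' \in Lpair u v}.
Proof.
move=> d d'; rewrite !inE => /existsP[k /andP[ku kdv]] /existsP[k' /andP[k'u k'dv]].
apply/existsP; exists (Lmul k k'); rewrite (LstabM ku k'u) /= LmulACA.
exact: LstabM.
Qed.

Lemma mem_Lmul_index2 (H : {set Lidx}) c e :
    Lone \in H -> {in H &, forall h h', Lmul h h' \in H} ->
    (32 <= #|H|)%N || (e \in H) ->
  (Lmul c e \in H) = ((c \in H) == (e \in H)).
Proof.
move=> H1 HM; have HK h h' : h \in H -> (Lmul h h' \in H) = (h' \in H).
  by move=> hH; apply/idP/idP => [|/(HM _ _ hH)//]; move/(HM _ _ hH); rewrite LmulKk.
case eH: (e \in H) => /=; first by move=> _; rewrite LmulC HK.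
rewrite orbF => cardH.
case cH: (c \in H); first by rewrite HK ?eH.
set cH' := [set Lmul c h | h in H].
have card_cH : #|cH'| = #|H| by apply: card_imset; apply: can_inj (LmulKk c).
have disj : [disjoint H & cH'].
  apply/pred0P => h /=; apply/andP => -[hH /imsetP[h' h'H eq_h]].
  by move: (HM _ _ hH h'H); rewrite eq_h -LmulA Lmulkk Lmulk1 cH.
have : H :|: cH' = setT.
  apply/eqP; rewrite eqEcard subsetT cardsT card_Lidx cardsU.
  by rewrite (disjoint_setI0 disj) cards0 subn0 card_cH /=; lia.
move=> HcH; have := in_setT e; rewrite -HcH in_setU eH /= => /imsetP[h hH ->].
by rewrite LmulKk hH.
Qed.

Definition Lpair_pattern (r r' : vec) : Prop :=
  (forall d, ((dot r (Lmat d *m r') == 0) == (dot r r' == 0)) = (d \in Lpair r r'))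
  /\ (r != r' -> 32 <= #|Lpair r r'|)%N.

Lemma exists_Lmaps_pair r r' a a' b b' :
  [exists k, Lmaps k (Lmat a *m r) (Lmat a' *m r) && Lmaps k (Lmat b *m r') (Lmat b' *m r')]
  = (Lmul (Lmul a a') (Lmul b b') \in Lpair r r').
Proof.
set c := Lmul a a'; rewrite inE.
apply/existsP/existsP => -[k kP]; exists (Lmul k c); move: kP; rewrite !Lmaps_Lmat !inE -/c.
  by rewrite -LmulA LmulKk.
by rewrite -!(LmulA k) Lmulkk Lmulk1.
Qed.

Lemma dot0_pattern_Lpair r r' a a' b b' :
    Lpair_pattern r r' -> (r != r') || (a == b) ->
  ((dot (Lmat a' *m r) (Lmat b' *m r') == 0) == (dot (Lmat a *m r) (Lmat b *m r') == 0))
  = [exists k, Lmaps k (Lmat a *m r) (Lmat a' *m r) && Lmaps k (Lmat b *m r') (Lmat b' *m r')].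
Proof.
case=> patt card2 rr'_ab; set H := Lpair r r'.
have pattE d : (dot r (Lmat d *m r') == 0) = ((d \in H) == (dot r r' == 0)).
  by rewrite -patt; case: (_ == 0); case: (_ == 0).
have index2 : (32 <= #|H|)%N || (Lmul a b \in H).
  by case/orP: rr'_ab => [/card2->//|/eqP->]; rewrite Lmulkk Lpair1 orbT.
rewrite exists_Lmaps_pair !dot0_Lmat !pattE LmulACA (LmulC (Lmul a b)) -/H.
rewrite (mem_Lmul_index2 (Lmul a' b') (Lpair1 r r') (@LpairM r r') index2).
by case: (_ \in H); case: (_ \in H); case: (_ == 0).
Qed.

(** * Roots as integer sequences *)

Lemma existsb_iota n (P : pred 'I_n) (Q : pred nat) : (forall i : 'I_n, P i = Q i) ->
  [exists i, P i] = has Q (iota 0 n).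
Proof.
move=> PQ; apply/existsP/hasP => [[i Pi]|[m]].
  by exists (val i); rewrite -?PQ // mem_iota ltn_ord.
by rewrite mem_iota => /= ltmn Qm; exists (Ordinal ltmn); rewrite PQ.
Qed.

Lemma forallb_iota n (P : pred 'I_n) (Q : pred nat) : (forall i : 'I_n, P i = Q i) ->
  [forall i, P i] = all Q (iota 0 n).
Proof.
move=> PQ; apply/negb_inj; rewrite negb_forall -has_predC.
by apply: existsb_iota => i; rewrite /= PQ.
Qed.

Definition idx8 : seq nat := iota 0 8.

Definition vec_of_seq (r : seq int) : vec := \col_(i < 8) r`_i.

Definition seq_of_vec x : seq int := [seq x (inord i) 0 | i <- idx8].

Lemma size_seq_of_vec x : size (seq_of_vec x) = 8%N.
Proof. by rewrite size_map size_iota. Qed.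

Lemma seq_of_vecK : cancel seq_of_vec vec_of_seq.
Proof.
move=> x; apply/matrixP => i j; rewrite ord1 mxE (nth_map 0%N) ?size_iota //.
by rewrite nth_iota // inord_val.
Qed.

Lemma vec_of_seq_inj r s : size r = 8%N -> size s = 8%N ->
  (vec_of_seq r == vec_of_seq s) = (r == s).
Proof.
move=> r8 s8; apply/eqP/eqP => [rs|->//].
apply: (@eq_from_nth _ 0); rewrite r8 ?s8 // => i lti.
by have := congr1 (fun x => x (Ordinal lti) 0) rs; rewrite !mxE.
Qed.

Definition Ltab (k : Lidx) : seq (int * nat) := [seq (Lsign k i, Lperm k i) | i <- idx8].

Definition tab_act (t : seq (int * nat)) (r : seq int) : seq int :=
  [seq e.1 * r`_e.2 | e <- t].

Definition Lact (k : Lidx) : seq int -> seq int := tab_act (Ltab k).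

Lemma size_Lact k r : size (Lact k r) = 8%N.
Proof. by rewrite !size_map size_iota. Qed.

Lemma Lmat_vec_of_seq k r : Lmat k *m vec_of_seq r = vec_of_seq (Lact k r).
Proof.
apply/matrixP => i j; rewrite ord1 Lmat_mulmxE !mxE /Lact /tab_act -map_comp.
by rewrite (nth_map 0%N) ?size_iota // nth_iota //= inordK ?Lperm_lt.
Qed.

Lemma Lact1 r : size r = 8%N -> Lact Lone r = r.
Proof.
move=> r8; apply/eqP; rewrite -vec_of_seq_inj ?size_Lact //.
by rewrite -Lmat_vec_of_seq Lmat1x.
Qed.

Definition sv_seq (r s : seq int) : bool := (s == r) || (s == map -%R r).

Lemma sv_vec_of_seq r s : size r = 8%N -> size s = 8%N ->
  sv (vec_of_seq r) (vec_of_seq s) = sv_seq r s.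
Proof.
move=> r8 s8; rewrite /sv; have -> : - vec_of_seq r = vec_of_seq (map -%R r).
  by apply/matrixP => i j; rewrite !mxE (nth_map 0) ?r8.
by rewrite !vec_of_seq_inj ?size_map.
Qed.

Definition dot_seq (r s : seq int) : int := foldr +%R 0 [seq r`_i * s`_i | i <- idx8].

Lemma dot_vec_of_seq r s : dot (vec_of_seq r) (vec_of_seq s) = dot_seq r s.
Proof.
rewrite /dot /dot_seq foldrE big_map (eq_bigr (fun i : 'I_8 => r`_i * s`_i)) => [|i _].
  by rewrite -(big_mkord xpredT (fun i => r`_i * s`_i)).
by rewrite !mxE.
Qed.

Definition is_root_seq (r : seq int) : bool :=
  has (fun i => has (fun j => (i < j)%N && all (fun k =>
     if k == i then (r`_k == 1) || (r`_k == -1)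
     else if k == j then (r`_k == 1) || (r`_k == -1)
     else r`_k == 0) idx8) idx8) idx8
  || all (fun k => (r`_k == 1) || (r`_k == -1)) idx8
     && (foldr *%R 1 [seq r`_k | k <- idx8] == 1).

Lemma is_root_vec_of_seq r : is_root (vec_of_seq r) = is_root_seq r.
Proof.
rewrite /is_root /is_root_seq; congr orb; last congr andb.
- by do 2!apply: existsb_iota => ?; congr andb; apply: forallb_iota => k; rewrite !mxE.
- by apply: forallb_iota => k; rewrite mxE.
rewrite foldrE big_map (eq_bigr (fun k : 'I_8 => r`_k)) => [|k _]; last by rewrite mxE.
by rewrite -(big_mkord xpredT (fun k => r`_k)).
Qed.

Fixpoint words {T : Type} (A : seq T) (n : nat) : seq (seq T) :=
  if n is n'.+1 then [seq a :: s | a <- A, s <- words A n'] else [:: [::]].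

Lemma mem_words (T : eqType) (A : seq T) n s :
  (s \in words A n) = (size s == n) && all (mem A) s.
Proof.
elim: n s => [|n IH] [|a s] //=.
  by apply/negbTE/allpairsP => -[[b t] [_ _]].
apply/allpairsP/and3P => [[[b t] /= [bA]]|[/eqP[sn] aA sA]].
  by rewrite IH => /andP[/eqP<- tA] [-> ->]; rewrite eqxx bA.
by exists (a, s); rewrite IH sn eqxx.
Qed.

Definition root2 (i j : nat) (a b : int) : seq int :=
  [seq if k == i then a else if k == j then b else 0 | k <- idx8].

Definition E8_roots : seq (seq int) :=
  [seq root2 ij.1 ij.2 ab.1 ab.2
     | ij <- [seq (i, j) | i <- idx8, j <- [seq j <- idx8 | (i < j)%N]],
       ab <- [seq (a, b) | a <- [:: -1; 1], b <- [:: -1; 1]]]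
  ++ [seq s <- words [:: -1; 1] 8 | foldr *%R 1 s == 1].

Lemma size_E8_roots s : s \in E8_roots -> size s = 8%N.
Proof.
rewrite mem_cat mem_filter mem_words => /orP[/allpairsP[[ij ab] [_ _ ->]]|/and3P[_ /eqP//]].
by rewrite size_map size_iota.
Qed.

Lemma E8_rootsP x : is_root x -> seq_of_vec x \in E8_roots.
Proof.
have pm1 (z : int) : (z == 1) || (z == -1) -> z \in [:: -1; 1] by rewrite !inE orbC.
have nth_sov n : (n < 8)%N -> (seq_of_vec x)`_n = x (inord n) 0.
  by move=> ltn8; rewrite (nth_map 0%N) ?size_iota ?nth_iota.
rewrite /E8_roots mem_cat; case/orP => [/existsP[i /existsP[j /andP[ltij /forallP xij]]]|].
  have -> : seq_of_vec x = root2 i j (x i 0) (x j 0).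
    apply: (@eq_from_nth _ 0); rewrite ?size_seq_of_vec ?size_map ?size_iota // => n ltn8.
    rewrite nth_sov // (nth_map 0%N) ?size_iota // nth_iota // add0n.
    have := xij (inord n); rewrite -!val_eqE /= inordK //.
    by do 2?[case: eqP => [->|_]; first by rewrite inord_val]; move/eqP.
  apply/orP; left; apply/allpairsP; exists ((val i, val j), (x i 0, x j 0)); split=> //.
    by apply/allpairsPdep; exists (val i), (val j); rewrite mem_filter ltij !mem_iota !ltn_ord.
  have xi := xij i; have xj := xij j.
  rewrite eqxx in xi; rewrite -val_eqE (gtn_eqF ltij) eqxx in xj.
  by apply/allpairsP; exists (x i 0, x j 0); split=> //; apply: pm1.
case/andP=> /forallP xpm /eqP prod1; apply/orP; right.
rewrite mem_filter mem_words size_seq_of_vec eqxx andTb; apply/andP; split.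
  apply/eqP; rewrite foldrE big_map /idx8 -[iota 0 8]/(index_iota 0 8) big_mkord -[RHS]prod1.
  by apply: eq_bigr => k _; rewrite inord_val.
by apply/allP => _ /mapP[n n8 ->]; apply: pm1.
Qed.

Definition greedy_reps {T : Type} (rel : T -> T -> bool) (s : seq T) : seq T :=
  foldl (fun R z => if has (rel^~ z) R then R else rcons R z) [::] s.

Section GreedyReps.
Variables (T : eqType) (rel : T -> T -> bool).
Let step R z := if has (rel^~ z) R then R else rcons R z.

Lemma greedy_reps_sub s : {subset greedy_reps rel s <= s}.
Proof.
rewrite /greedy_reps -/step; suff sub R : {subset foldl step R s <= R ++ s} by apply: sub.
elim: s R => [|a s IH] R b /=; first by rewrite cats0.
move/IH; rewrite !mem_cat inE /step => /orP[|->]; last by rewrite !orbT.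
by case: ifP => _; [move->|rewrite mem_rcons inE => /orP[->|->]]; rewrite ?(orbT, orTb).
Qed.

Lemma greedy_reps_cover s : {in s, forall z, rel z z} ->
  {in s, forall z, has (rel^~ z) (greedy_reps rel s)}.
Proof.
rewrite /greedy_reps -/step; elim: s [::] => [|a s IH] R refl_s z //=.
have keep R' b : has (rel^~ b) R' -> has (rel^~ b) (foldl step R' s).
  elim: s R' {IH refl_s} => //= c s IH R' bR'; apply: IH; rewrite /step.
  by case: ifP => // _; rewrite -cats1 has_cat bR'.
rewrite inE => /predU1P[->|zs].
  apply: keep; rewrite /step; case: ifP => // _.
  by rewrite -cats1 has_cat /= refl_s ?inE ?eqxx ?orbT.
by apply: IH => // b bs; apply: refl_s; rewrite inE bs orbT.
Qed.

End GreedyReps.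

(** * A certificate computed over orbit representatives *)

(* Literal ordinals, because [enum 'I_4] does not reduce when the kernel
   evaluates [E8_certificate]. *)
Definition ords4 : seq 'I_4 :=
  [:: @Ordinal 4 0 isT; @Ordinal 4 1 isT; @Ordinal 4 2 isT; @Ordinal 4 3 isT].

Definition Lenum : seq Lidx :=
  [seq (ab, c) | ab <- [seq (a, b) | a <- ords4, b <- ords4], c <- ords4].

Lemma mem_Lenum k : k \in Lenum.
Proof.
have mem4 (p : 'I_4) : p \in ords4 by case: p => [[|[|[|[|//]]]] ?]; rewrite !inE -?val_eqE.
by case: k => [[a b] c]; apply: allpairs_f (mem4 c); apply: allpairs_f (mem4 a) (mem4 b).
Qed.

Lemma card_Lenum (A : {set Lidx}) : #|A| = count (mem A) Lenum.
Proof.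
have uniq_Lenum : uniq Lenum by [].
rewrite -size_filter; move/card_uniqP: (filter_uniq (mem A) uniq_Lenum) => <-.
by apply: eq_card => k; rewrite mem_filter mem_Lenum andbT.
Qed.

(* The action tables, like the stabilizers in [reps_check], are passed as
   arguments so that reduction computes them only once. *)
Definition orbit_rel (tabs : seq (seq (int * nat))) (r s : seq int) : bool :=
  has (fun t => sv_seq (tab_act t r) s) tabs.

Definition E8_reps : seq (seq int) := greedy_reps (orbit_rel (map Ltab Lenum)) E8_roots.

Lemma size_E8_reps r : r \in E8_reps -> size r = 8%N.
Proof. by move/greedy_reps_sub/size_E8_roots. Qed.

Lemma E8_reps_cover x : is_root x -> exists2 r, r \in E8_reps & inLorbit (vec_of_seq r) x.
Proof.
move/E8_rootsP => xE; pose rel := orbit_rel (map Ltab Lenum).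
have relE r s : rel r s = has (fun k => sv_seq (Lact k r) s) Lenum.
  by rewrite /rel /orbit_rel has_map.
have rel_refl : {in E8_roots, forall s, rel s s}.
  move=> s /size_E8_roots s8; rewrite relE; apply/hasP; exists Lone; first exact: mem_Lenum.
  by rewrite Lact1 // /sv_seq eqxx.
case/hasP: (greedy_reps_cover rel_refl xE) => r rE; rewrite relE => /hasP[k _ kr].
exists r; first exact: rE.
apply/existsP; exists k; rewrite /Lmaps Lmat_vec_of_seq -[x]seq_of_vecK.
by rewrite sv_vec_of_seq ?size_Lact ?size_seq_of_vec.
Qed.

Definition stab_seq (r : seq int) : seq Lidx := [seq k <- Lenum | sv_seq (Lact k r) r].

Definition pair_check (r : seq int) (Sr : seq Lidx) (r' : seq int) : bool :=
  let images := [seq Lact k r' | k <- Sr] in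
  let data := [seq let y := Lact d r' in
                   ((dot_seq r y == 0) == (dot_seq r r' == 0), has (sv_seq y) images)
              | d <- Lenum] in
  all (fun b => b.1 == b.2) data && ((r != r') ==> (32 <= count snd data)%N).

Definition reps_check (R : seq (seq int * seq Lidx)) : bool :=
  all (fun p => all (fun k => is_root_seq (Lact k p.1)) Lenum
                && all (fun q => pair_check p.1 p.2 q.1) R) R.

Definition E8_certificate : bool := reps_check [seq (r, stab_seq r) | r <- E8_reps].

Lemma E8_certificate_ok : E8_certificate.
Proof. by vm_compute. Qed.

Lemma mem_Lpair_seq r r' d : size r = 8%N -> size r' = 8%N ->
  (d \in Lpair (vec_of_seq r) (vec_of_seq r'))
  = has (sv_seq (Lact d r')) [seq Lact k r' | k <- stab_seq r].
Proof.
move=> r8 r'8; rewrite inE has_map; apply/existsP/hasP => [[k /andP[kr kdr']]|[k]].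
  exists k; last by move: kdr'; rewrite Lstab_Lmul !Lmat_vec_of_seq sv_vec_of_seq ?size_Lact.
  move: kr; rewrite mem_filter mem_Lenum inE /Lmaps Lmat_vec_of_seq.
  by rewrite sv_vec_of_seq ?size_Lact // => ->.
rewrite mem_filter mem_Lenum andbT /= => kr dk; exists k.
by rewrite inE /Lmaps Lstab_Lmul !Lmat_vec_of_seq !sv_vec_of_seq ?size_Lact ?kr.
Qed.

Lemma E8_reps_root r k : r \in E8_reps -> is_root (Lmat k *m vec_of_seq r).
Proof.
move=> rR; have := E8_certificate_ok; rewrite /E8_certificate /reps_check all_map.
move=> /allP/(_ r rR)/andP[/allP rootsP _].
by rewrite Lmat_vec_of_seq is_root_vec_of_seq; apply: rootsP; apply: mem_Lenum.
Qed.

Lemma E8_reps_pattern r r' : r \in E8_reps -> r' \in E8_reps ->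
  Lpair_pattern (vec_of_seq r) (vec_of_seq r').
Proof.
move=> rR r'R; have r8 := size_E8_reps rR; have r'8 := size_E8_reps r'R.
have := E8_certificate_ok; rewrite /E8_certificate /reps_check all_map.
move=> /allP/(_ r rR)/andP[_ /allP/(_ _ (map_f (fun s => (s, stab_seq s)) r'R))].
rewrite /pair_check all_map count_map => /andP[/allP dataP cardP]; split=> [d|neq].
  have /eqP := dataP d (mem_Lenum d).
  by rewrite Lmat_vec_of_seq !dot_vec_of_seq mem_Lpair_seq.
have rr' : r != r' by apply: contra_neq neq => ->.
rewrite card_Lenum (eq_count (fun d => mem_Lpair_seq d r8 r'8)).
by move: cardP; rewrite rr'.
Qed.

(** * Automorphisms and non-edges of G^w *)

Lemma is_root_Lmat k x : is_root x -> is_root (Lmat k *m x).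
Proof.
case/E8_reps_cover => r rR /existsP[a ra].
rewrite (@is_root_sv _ (Lmat (Lmul k a) *m vec_of_seq r)); first exact: E8_reps_root.
by apply: (sv_trans _ (Lmat_comp k a _)); rewrite sv_Lmat sv_sym.
Qed.

Lemma adjGw_Lmat w k x y : adjGw w (Lmat k *m x) (Lmat k *m y) = adjGw w x y.
Proof.
by rewrite /adjGw /adjE8 dot_Lmat; do 2!apply: eq_existsb => ?; rewrite !inLorbit_Lmat.
Qed.

Lemma nonadjGw_dot0 w i j x y : Ltransversal w -> inLorbit (w i) x -> inLorbit (w j) y ->
  ~~ adjGw w x y = ((dot x y == 0) == (dot (w i) (w j) == 0)).
Proof.
case=> _ _ w_inj ix jy.
have -> : adjGw w x y = (if dot (w i) (w j) != 0 then adjE8 x y else ~~ adjE8 x y).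
  apply/existsP/idP => [[i' /existsP[j' /and3P[i'x j'y]]]|adj].
    have -> : i' = i by apply: w_inj; apply: inLorbit_trans i'x _; rewrite inLorbitC.
    by have -> : j' = j by apply: w_inj; apply: inLorbit_trans j'y _; rewrite inLorbitC.
  by exists i; apply/existsP; exists j; rewrite ix jy.
by rewrite /adjE8; case: (dot (w i) (w j) == 0); rewrite ?negbK; case: (dot x y == 0).
Qed.

Lemma nonadjGw_Lorbit w i j x y : Ltransversal w ->
    inLorbit (w i) x -> inLorbit (w j) y ->
  ~~ adjGw w x y = [exists k, Lmaps k (w i) x && Lmaps k (w j) y].
Proof.
move=> wT ix jy; have [w_root _ w_inj] := wT; rewrite (nonadjGw_dot0 wT ix jy).
have [r rR /existsP[a ra]] := E8_reps_cover (w_root i).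
have [r' [b [r'R r'b rr'_ab]]] : exists r' b, [/\ r' \in E8_reps,
    Lmaps b (vec_of_seq r') (w j) & (vec_of_seq r != vec_of_seq r') || (a == b)].
  case: (eqVneq i j) => [<-|ij].
    by exists r, a; split; [exact: rR | exact: ra | rewrite (eqxx a) orbT].
  have [r' r'R /existsP[b r'b]] := E8_reps_cover (w_root j).
  exists r', b; split; [exact: r'R | exact: r'b |].
  apply/orP; left; apply: contra_neq ij => rr'; apply: w_inj.
  apply: (@inLorbit_trans (vec_of_seq r)); first by rewrite inLorbitC; apply/existsP; exists a.
  by rewrite rr'; apply/existsP; exists b.
have [a' ra'] : exists a', Lmaps a' (vec_of_seq r) x.
  by case/existsP: ix => k kx; exists (Lmul k a); apply: Lmaps_comp kx.
have [b' r'b'] : exists b', Lmaps b' (vec_of_seq r') y.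
  by case/existsP: jy => k ky; exists (Lmul k b); apply: Lmaps_comp ky.
rewrite -(dot_sv ra' r'b') -(dot_sv ra r'b).
rewrite (dot0_pattern_Lpair a' b' (E8_reps_pattern rR r'R) rr'_ab).
by apply: eq_existsb => k; rewrite (Lmaps_sv _ ra ra') (Lmaps_sv _ r'b r'b').
Qed.

Theorem lemma3p10 (w : 'I_15 -> vec) :
  Ltransversal w ->
  (* L is contained in Aut(G^w): each sigma_M is a well-defined bijection of
     V(G_{E8}) preserving adjacency and non-adjacency of G^w *)
  (forall k : Lidx,
     (forall x, is_root x -> is_root (Lmat k *m x))
     /\ (forall y, is_root y -> exists2 x, is_root x & Lmaps k x y)
     /\ (forall x y, is_root x -> is_root y ->
           adjGw w (Lmat k *m x) (Lmat k *m y) = adjGw w x y))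
  /\
  (* non-edges of G^w *)
  (forall (i j : 'I_15) (x y : vec), is_root x -> is_root y ->
     inLorbit (w i) x -> inLorbit (w j) y ->
     (~~ adjGw w x y <-> exists k : Lidx, Lmaps k (w i) x && Lmaps k (w j) y)).
Proof.
move=> wT; split=> [k|i j x y _ _ ix jy]; last first.
  by rewrite (nonadjGw_Lorbit wT ix jy); split=> /existsP.
split; first exact: is_root_Lmat.
split=> [y yroot|x y _ _]; last exact: adjGw_Lmat.
by exists (Lmat k *m y); [apply: is_root_Lmat | apply: Lmat_invol].
Qed.
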